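(* Read's space $\mathcal R=(c_0,|||\cdot|||)$ is not locally uniformly rotund: there exist $x$ with $|||x|||=1$ and a sequence $(x_n)$ with $|||x_n|||=1$ and $|||x+x_n|||\to2$ such that $(x_n)$ does not converge to $x$ in norm.
   Context: Let $c_{00}(\mathbb Q)$ be the set of finitely supported sequences with rational coefficients, and let $(u_n)_{n\in\mathbb N}$ be a sequence in $c_{00}(\mathbb Q)$ which lists every element of $c_{00}(\mathbb Q)$ infinitely many times. Let $(a_n)_{n\in\mathbb N}$ be a strictly increasing sequence of positive integers with $a_n>\max\operatorname{supp} u_n$ and $a_n>\|u_n\|_1$ for every $n$. $(e_n)$ denotes the canonical unit vectors and $\langle x,y\rangle=\sum_n x_ny_n$. Read's norm on $c_0$ is $|||x||| = \|x\|_\infty + \sum_{n} 2^{-a_n^2}|\langle x, u_n - e_{a_n}\rangle|$, and Read's space is $\mathcal R=(c_0,|||\cdot|||)$ (real scalars). A Banach space is locally uniformly rotund if for every $x$ in the unit sphere and every sequence $(x_n)$ in the unit sphere with $\|x+x_n\|\to 2$ one has $\|x_n-x\|\to0$. *)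

From HB Require Import structures.
From mathcomp Require Import all_boot all_order all_algebra.
From mathcomp Require Import all_classical all_reals all_analysis.
Set Implicit Arguments. Unset Strict Implicit. Unset Printing Implicit Defensive.
Import Order.TTheory GRing.Theory Num.Theory.
Import numFieldNormedType.Exports.
Local Open Scope classical_set_scope.
Local Open Scope ring_scope.

Definition c0 (R : realType) : set (nat -> R) :=
  [set x | x i @[i --> \oo] --> (0 : R)].

Definition supnorm (R : realType) (x : nat -> R) : R :=
  sup (range (fun i => `|x i|)).

(* <x, u_n - e_{a_n}> ; u_n (rational, supported in [0, a_n)) *)
Definition read_inner (R : realType) (a : nat -> nat) (u : nat -> nat -> rat)
    (x : nat -> R) (n : nat) : R :=
  \sum_(i < a n) x i * ratr (u n i) - x (a n).

Definition read_norm (R : realType) (a : nat -> nat) (u : nat -> nat -> rat)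
    (x : nat -> R) : R :=
  supnorm x +
  limn (fun N => \sum_(0 <= n < N) ((2 : R) ^- (a n ^ 2) * `|read_inner a u x n|)).

Definition LUR (R : realType) (V : set (nat -> R)) (N : (nat -> R) -> R) : Prop :=
  forall x, V x -> N x = 1 ->
  forall xs : nat -> nat -> R, (forall n, V (xs n)) -> (forall n, N (xs n) = 1) ->
  N (fun i => x i + xs n i) @[n --> \oo] --> (2 : R) ->
  N (fun i => xs n i - x i) @[n --> \oo] --> (0 : R).

(* Read's norm is the sup norm plus the seminorm
   P z = sum_k 2^-(a_k^2) |<z, u_k - e_(a_k)>|.  The k-th term only sees the
   coordinates up to a_k, and its weight 2^-(a_k^2) swamps the bound a_k + 1 on
   |<z, u_k - e_(a_k)>|; hence P e_m <= 8 2^-m, and on vectors p e_0 + q e_m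
   Read's norm is p |||e_0||| up to an error O(2^-m).  So the failure of local
   uniform rotundity of the sup norm survives: for x = e_0 / |||e_0||| and
   x_n = (e_0 + e_(n+1)) / |||e_0 + e_(n+1)||| we get |||x + x_n||| -> 2, while
   |||x_n - x||| >= |(x_n)_(n+1)| = 1 / |||e_0 + e_(n+1)||| -> 1 / |||e_0||| > 0. *)

From mathcomp Require Import all_boot all_order all_algebra.
From mathcomp Require Import all_classical all_reals all_analysis.
From mathcomp Require Import ring lra zify.
Import Order.TTheory GRing.Theory Num.Theory.
Import numFieldNormedType.Exports.
Set Implicit Arguments. Unset Strict Implicit. Unset Printing Implicit Defensive.
Local Open Scope ring_scope.

Lemma leq_succ_mul_exp2 (n k m : nat) : (k < n)%N -> (m <= n)%N ->
  ((n + 1) * 2 ^ (k + m) <= 2 ^ (n ^ 2 + 2))%N.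
Proof.
move=> kn mn; have n_lt : (n + 1 <= 2 ^ n)%N by rewrite addn1 ltn_expl.
apply: (@leq_trans (2 ^ n * 2 ^ (k + m))); first by rewrite leq_mul2r n_lt orbT.
by rewrite -expnD leq_pexp2l //; nia.
Qed.

Lemma incr_gt_id (a : nat -> nat) : (0 < a 0)%N -> (forall n, (a n < a n.+1)%N) ->
  forall k, (k < a k)%N.
Proof. by move=> a0 a_incr; elim=> // k IHk; exact: leq_ltn_trans IHk (a_incr k). Qed.

Lemma cvg_dist_le (R : realType) (f g h : nat -> R) (l : R) :
  (forall n, `|f n - g n| <= h n) ->
  (g n @[n --> \oo] --> l)%classic -> (h n @[n --> \oo] --> 0)%classic ->
  (f n @[n --> \oo] --> l)%classic.
Proof.
move=> fgh gl h0; apply: (@squeeze_cvgr _ _ _ _ (g - h) (g + h)).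
- by near=> n; have := fgh n; rewrite ler_distl.
- by rewrite -(subr0 l); exact: cvgB.
- by rewrite -(addr0 l); exact: cvgD.
Unshelve. all: end_near.
Qed.

Section UnitSequences.
Variable R : realType.

Lemma supnorm_ge (z : nat -> R) (B : R) j :
  (forall i, `|z i| <= B) -> `|z j| <= supnorm z.
Proof.
by move=> zB; apply: ub_le_sup; [exists B => _ [i _ <-] | exists j].
Qed.

Lemma supnorm_attained (z : nat -> R) j :
  (forall i, `|z i| <= `|z j|) -> supnorm z = `|z j|.
Proof.
move=> zj; apply/le_anti; rewrite (supnorm_ge _ zj) andbT.
by apply: ge_sup; [exists `|z j|, j | move=> _ [i _ <-]].
Qed.

Definition unit_seq (m : nat) : nat -> R := fun i => (i == m)%:R.

Definition two_point (p q : R) (m : nat) : nat -> R :=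
  p *: unit_seq 0 + q *: unit_seq m.

Lemma unit_seq_le1 m i : `|unit_seq m i| <= 1.
Proof. by rewrite /unit_seq; case: eqP; rewrite ?normr1 ?normr0. Qed.

Lemma unit_seq_eq0 m i : (i < m)%N -> unit_seq m i = 0.
Proof. by rewrite /unit_seq ltn_neqAle => /andP[/negbTE ->]. Qed.

Lemma scale_unit_seq_le (c : R) m i : `|(c *: unit_seq m) i| <= `|c|.
Proof. by rewrite normrM ler_piMr ?unit_seq_le1. Qed.

Lemma supnorm_unit_seq m : supnorm (unit_seq m) = 1.
Proof.
by rewrite (@supnorm_attained _ m) => [|i]; rewrite /unit_seq ?eqxx ?normr1 // unit_seq_le1.
Qed.

Lemma two_pointE p q m i :
  two_point p q m i = p * (i == 0)%:R + q * (i == m)%:R.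
Proof. by []. Qed.

Lemma two_pointZ c p q m : c *: two_point p q m = two_point (c * p) (c * q) m.
Proof. by rewrite /two_point scalerDr !scalerA. Qed.

Lemma two_point_le p q m i : `|two_point p q m i| <= `|p| + `|q|.
Proof.
exact: le_trans (ler_normD _ _) (lerD (scale_unit_seq_le _ _ _) (scale_unit_seq_le _ _ _)).
Qed.

Lemma two_point_at0 p q m : (0 < m)%N -> two_point p q m 0 = p.
Proof. by move=> m0; rewrite two_pointE eqxx eq_sym gtn_eqF // mulr1 mulr0 addr0. Qed.

Lemma two_point_atm p q m : (0 < m)%N -> two_point p q m m = q.
Proof. by move=> m0; rewrite two_pointE eqxx gtn_eqF // mulr1 mulr0 add0r. Qed.

Lemma supnorm_two_point p q m : (0 < m)%N -> `|q| <= `|p| ->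
  supnorm (two_point p q m) = `|p|.
Proof.
move=> m0 qp; rewrite (@supnorm_attained _ 0) two_point_at0 // => i.
rewrite two_pointE; case: eqP => [->|_]; first by rewrite eq_sym gtn_eqF // mulr1 mulr0 addr0.
by case: eqP; rewrite ?mulr1 ?mulr0 ?add0r ?normr0.
Qed.

Lemma c0_two_point p q m : c0 (two_point p q m).
Proof.
apply: cvg_near_cst; exists m.+1 => // i /= mi.
by rewrite two_pointE !gtn_eqF ?(leq_ltn_trans _ mi) // !mulr0 addr0.
Qed.

End UnitSequences.
Arguments unit_seq {R} m.

Section ReadNorm.
Variables (R : realType) (a : nat -> nat) (u : nat -> nat -> rat).
Hypothesis a_gt : forall k, (k < a k)%N.
Hypothesis u_l1 : forall n, \sum_(i < a n) `|u n i| <= (a n)%:R.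

Local Notation N := (read_norm a u).

Lemma read_innerD (z w : nat -> R) k :
  read_inner a u (z + w) k = read_inner a u z k + read_inner a u w k.
Proof.
rewrite /read_inner; under eq_bigr do rewrite mulrDl.
by rewrite big_split addrACA -opprD.
Qed.

Lemma read_innerZ (c : R) (z : nat -> R) k :
  read_inner a u (c *: z) k = c * read_inner a u z k.
Proof.
rewrite /read_inner mulrBr mulr_sumr; congr (_ - _).
by apply: eq_bigr => i _; rewrite [RHS]mulrA.
Qed.

Lemma read_inner_le (z : nat -> R) (B : R) k : (forall i, `|z i| <= B) ->
  `|read_inner a u z k| <= B * ((a k)%:R + 1).
Proof.
move=> zB; have B0 : 0 <= B by exact: le_trans (zB 0%N).
have u_l1R : \sum_(i < a k) `|(ratr (u k i) : R)| <= (a k)%:R.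
  under eq_bigr do rewrite -ratr_norm.
  by rewrite -ratr_nat -rmorph_sum ler_rat.
rewrite /read_inner mulrDr mulr1 (le_trans (ler_normB _ _)) // lerD ?zB //.
apply: le_trans (ler_norm_sum _ _ _) (le_trans _ (ler_wpM2l B0 u_l1R)).
by rewrite mulr_sumr ler_sum // => i _; rewrite normrM ler_wpM2r.
Qed.

Lemma read_inner_eq0 (z : nat -> R) m k : (forall i, (i < m)%N -> z i = 0) ->
  (a k < m)%N -> read_inner a u z k = 0.
Proof.
move=> z0 akm; rewrite /read_inner z0 // subr0 big1 // => i _.
by rewrite z0 ?mul0r // (ltn_trans (ltn_ord i)).
Qed.

Definition read_term (z : nat -> R) (k : nat) : R :=
  2 ^- (a k ^ 2) * `|read_inner a u z k|.

Definition read_series (z : nat -> R) : R := limn (series (read_term z)).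

Lemma read_normE (z : nat -> R) : N z = supnorm z + read_series z.
Proof. by []. Qed.

Lemma read_term_ge0 (z : nat -> R) k : 0 <= read_term z k.
Proof. by rewrite mulr_ge0 // invr_ge0 exprn_ge0. Qed.

Lemma read_term_le_geometric (z : nat -> R) (B : R) m :
  (forall i, `|z i| <= B) -> (forall i, (i < m)%N -> z i = 0) ->
  forall k, read_term z k <= geometric (4 * B * 2^-1 ^+ m) 2^-1 k.
Proof.
move=> zB z0 k; have B0 : 0 <= B by exact: le_trans (zB 0%N).
have [akm|mak] := ltnP (a k) m.
  by rewrite /read_term (read_inner_eq0 z0 akm) normr0 mulr0 geometric_ge0 // !mulr_ge0.
have weight_le : ((a k)%:R + 1) * 2 ^+ (k + m) <= 2 ^+ (a k ^ 2) * 4 :> R.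
  have := leq_succ_mul_exp2 (a_gt k) mak; rewrite -(ler_nat R) natrM !natrX natrD.
  by rewrite [in X in _ <= X]exprD expr2 (_ : 2 * 2 = 4 :> R) //; lra.
rewrite /= -(mulrA (4 * B)) -exprD exprVn (addnC m k) /read_term.
apply: le_trans (ler_wpM2l _ (read_inner_le k zB)) _.
  by rewrite invr_ge0 exprn_ge0.
rewrite ler_pdivrMl ?exprn_gt0 // mulrA ler_pdivlMr ?exprn_gt0 //.
by nra.
Qed.

Lemma read_series_cvg (z : nat -> R) (B : R) :
  (forall i, `|z i| <= B) -> cvgn (series (read_term z)).
Proof.
move=> zB; have B0 : 0 <= B by exact: le_trans (zB 0%N).
have term_le := read_term_le_geometric (m := 0) zB.
apply: (series_le_cvg (read_term_ge0 z) _ (term_le _)) => //.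
  by move=> k; rewrite geometric_ge0 // ?invr_ge0 // !mulr_ge0.
by apply: is_cvg_geometric_series; rewrite gtr0_norm ?invf_lt1 //; lra.
Qed.

Lemma read_series_le (z : nat -> R) (B : R) m :
  (forall i, `|z i| <= B) -> (forall i, (i < m)%N -> z i = 0) ->
  read_series z <= 8 * B * 2^-1 ^+ m.
Proof.
move=> zB z0; have B0 : 0 <= B by exact: le_trans (zB 0%N).
apply: limr_le; first exact: read_series_cvg zB.
near=> n; apply: (le_trans (y := series (geometric (4 * B * 2^-1 ^+ m) 2^-1) n)).
  by apply: ler_sum => k _; exact: read_term_le_geometric.
apply: le_trans (geometric_le_lim _ _ _ _) _.
- by rewrite !mulr_ge0 // exprn_ge0.
- by [].
- by rewrite gtr0_norm ?invf_lt1 //; lra.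
- by rewrite (_ : 1 - 2^-1 = 2^-1 :> R) ?invrK; [rewrite mulrAC; lra | field].
Unshelve. all: end_near.
Qed.

Lemma read_series_ge0 (z : nat -> R) (B : R) :
  (forall i, `|z i| <= B) -> 0 <= read_series z.
Proof.
move=> zB; apply: limr_ge; first exact: read_series_cvg zB.
by near=> n; apply: sumr_ge0 => k _; exact: read_term_ge0.
Unshelve. all: end_near.
Qed.

Lemma read_seriesD (z w : nat -> R) (Bz Bw : R) :
  (forall i, `|z i| <= Bz) -> (forall i, `|w i| <= Bw) ->
  read_series (z + w) <= read_series z + read_series w.
Proof.
move=> zB wB; have zwB i : `|(z + w) i| <= Bz + Bw.
  exact: le_trans (ler_normD _ _) (lerD (zB i) (wB i)).
have [zc wc] := (read_series_cvg zB, read_series_cvg wB).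
rewrite /read_series -lim_seriesD //.
apply: lim_series_le; [exact: read_series_cvg zwB | exact: is_cvg_seriesD |].
by move=> k; rewrite /read_term read_innerD -mulrDr ler_wpM2l ?ler_normD.
Qed.

Lemma read_seriesZ (c : R) (z : nat -> R) (B : R) :
  (forall i, `|z i| <= B) -> read_series (c *: z) = `|c| * read_series z.
Proof.
move=> zB; rewrite /read_series (_ : read_term (c *: z) = `|c| *: read_term z).
  exact: lim_seriesZ (read_series_cvg zB).
by apply/funext => k; rewrite /read_term read_innerZ normrM mulrCA.
Qed.

Lemma read_norm_ge_coord (z : nat -> R) (B : R) j :
  (forall i, `|z i| <= B) -> `|z j| <= N z.
Proof.
move=> zB; rewrite read_normE (le_trans (supnorm_ge j zB)) // lerDl.
exact: (read_series_ge0 zB).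
Qed.

Lemma read_series_dist_le (z w : nat -> R) (Bz Bw : R) :
  (forall i, `|z i| <= Bz) -> (forall i, `|w i| <= Bw) ->
  `|read_series (z + w) - read_series z| <= read_series w.
Proof.
move=> zB wB; have zwB i : `|(z + w) i| <= Bz + Bw.
  exact: le_trans (ler_normD _ _) (lerD (zB i) (wB i)).
have up := read_seriesD zB wB.
have down : read_series z <= read_series (z + w) + read_series w.
  have nwB i : `|(- w) i| <= Bw by rewrite normrN.
  have := read_seriesD zwB nwB.
  by rewrite addrK -scaleN1r (read_seriesZ _ wB) normrN1 mul1r.
by rewrite ler_norml; apply/andP; split; lra.
Qed.

Lemma read_series_unit_seq_le m : read_series (unit_seq m) <= 8 * 2^-1 ^+ m :> R.
Proof.
have := read_series_le (@unit_seq_le1 R m) (@unit_seq_eq0 R m).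
by rewrite mulr1.
Qed.

Lemma read_norm_two_point_dist (p q : R) m : (0 < m)%N -> `|q| <= p ->
  `|N (two_point p q m) - p * N (unit_seq 0)| <= `|q| * (8 * 2^-1 ^+ m).
Proof.
move=> m0 qp; have p0 : 0 <= p := le_trans (normr_ge0 q) qp.
have pe0 : read_series (p *: unit_seq 0) = p * read_series (unit_seq 0).
  by rewrite (read_seriesZ _ (@unit_seq_le1 R 0)) ger0_norm.
rewrite !read_normE supnorm_unit_seq supnorm_two_point ?(ger0_norm p0) //.
rewrite (_ : p + _ - _ = read_series (two_point p q m) - read_series (p *: unit_seq 0)).
  2: by rewrite pe0; ring.
apply: le_trans (read_series_dist_le (scale_unit_seq_le p 0) (scale_unit_seq_le q m)) _.
rewrite (read_seriesZ _ (@unit_seq_le1 R m)) ler_wpM2l //.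
exact: read_series_unit_seq_le.
Qed.

Lemma read_norm_two_pointZ (c p q : R) m : (0 < m)%N -> `|q| <= `|p| ->
  N (two_point (c * p) (c * q) m) = `|c| * N (two_point p q m).
Proof.
move=> m0 qp; rewrite !read_normE -two_pointZ (read_seriesZ _ (two_point_le p q m)).
by rewrite two_pointZ !supnorm_two_point ?normrM ?ler_wpM2l // mulrDr.
Qed.

Definition e0_norm : R := N (unit_seq 0).

Definition spike_norm (n : nat) : R := N (two_point 1 1 n.+1).

Definition center : nat -> R := e0_norm^-1 *: unit_seq 0.

Definition spike (n : nat) : nat -> R :=
  two_point (spike_norm n)^-1 (spike_norm n)^-1 n.+1.

Lemma e0_norm_ge1 : 1 <= e0_norm.
Proof.
by have := read_norm_ge_coord 0 (@unit_seq_le1 R 0); rewrite /unit_seq normr1.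
Qed.

Lemma e0_norm_gt0 : 0 < e0_norm.
Proof. exact: lt_le_trans ltr01 e0_norm_ge1. Qed.

Lemma spike_norm_ge1 n : 1 <= spike_norm n.
Proof.
have := read_norm_ge_coord 0 (two_point_le (1 : R) 1 n.+1).
by rewrite two_point_at0 // normr1.
Qed.

Lemma spike_norm_gt0 n : 0 < spike_norm n.
Proof. exact: lt_le_trans ltr01 (spike_norm_ge1 n). Qed.

Lemma cvg_read_norm_two_point (p q : nat -> R) (l : R) :
  (forall n, `|q n| <= p n) -> (forall n, `|q n| <= 1) ->
  (p n @[n --> \oo] --> l)%classic ->
  (N (two_point (p n) (q n) n.+1) @[n --> \oo] --> l * e0_norm)%classic.
Proof.
move=> qp q1 pl; have tail0 : (8 * 2^-1 ^+ n.+1 @[n --> \oo] --> (0 : R))%classic.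
  rewrite (cvg_shiftS (geometric (8 : R) 2^-1)).
  by apply: cvg_geometric; rewrite gtr0_norm ?invf_lt1 //; lra.
apply: (@cvg_dist_le _ _ (fun n => p n * e0_norm)) tail0 => [n|]; last exact: cvgMl.
apply: le_trans (read_norm_two_point_dist (ltn0Sn n) (qp n)) _.
by rewrite ler_piMl // mulr_ge0 // exprn_ge0.
Qed.

Lemma spike_norm_cvg : (spike_norm n @[n --> \oo] --> e0_norm)%classic.
Proof.
have := @cvg_read_norm_two_point (fun=> 1) (fun=> 1) 1.
by rewrite normr1 mul1r; apply => //; exact: cvg_cst.
Qed.

Lemma read_norm_center : N center = 1.
Proof.
have := read_norm_two_point_dist (p := e0_norm^-1) (q := 0) (ltn0Sn 0).
rewrite /two_point scale0r addr0 normr0 mul0r normr_le0 subr_eq0.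
by rewrite mulVf ?lt0r_neq0 ?invr_ge0 ?ltW ?e0_norm_gt0 // => /(_ isT)/eqP.
Qed.

Lemma read_norm_spike n : N (spike n) = 1.
Proof.
have sn_gt0 := spike_norm_gt0 n.
rewrite /spike -[(spike_norm n)^-1]mulr1 read_norm_two_pointZ ?normr1 //.
by rewrite ger0_norm ?mulVf ?invr_ge0 ?lt0r_neq0 ?ltW.
Qed.

Lemma read_norm_center_add_spike_cvg :
  (N (center + spike n) @[n --> \oo] --> (2 : R))%classic.
Proof.
have e0_neq0 := lt0r_neq0 e0_norm_gt0.
have spike_inv_ge0 n : 0 <= (spike_norm n)^-1 by rewrite invr_ge0 ltW ?spike_norm_gt0.
have -> : (2 : R) = (e0_norm^-1 + e0_norm^-1) * e0_norm by rewrite mulrDl mulVf.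
rewrite (_ : (fun n => N (center + spike n)) = fun n =>
    N (two_point (e0_norm^-1 + (spike_norm n)^-1) (spike_norm n)^-1 n.+1)).
  2: by apply/funext => n; rewrite /two_point addrA scalerDl.
apply: cvg_read_norm_two_point => [n|n|].
- by rewrite ger0_norm // lerDr invr_ge0 ltW ?e0_norm_gt0.
- by rewrite ger0_norm // invf_le1 ?spike_norm_ge1 ?spike_norm_gt0.
- by apply: cvgD; [exact: cvg_cst | exact: (cvgV e0_neq0 spike_norm_cvg)].
Qed.

Lemma read_norm_spike_sub_center_ge n : (spike_norm n)^-1 <= N (spike n - center).
Proof.
set c := (spike_norm n)^-1.
have -> : spike n - center = two_point (c - e0_norm^-1) c n.+1.
  by rewrite /two_point addrAC scalerBl.
have := read_norm_ge_coord n.+1 (two_point_le (c - e0_norm^-1) c n.+1).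
by rewrite two_point_atm // ger0_norm // invr_ge0 ltW ?spike_norm_gt0.
Qed.

Lemma c0_center : c0 center.
Proof. by rewrite /center -[_ *: _]addr0 -(scale0r (unit_seq 1)); exact: c0_two_point. Qed.

End ReadNorm.

Arguments center {R} a u.
Arguments spike {R} a u n.

Theorem mainTheorem10 (R : realType) (u : nat -> nat -> rat) (a : nat -> nat)
  (Hu_c00 : forall n, exists M, forall i, (M <= i)%N -> u n i = 0)
  (Hu_enum : forall (s : seq rat) (N : nat),
      exists n, (N <= n)%N /\ forall i, u n i = nth 0 s i)
  (Ha_pos : forall n, (0 < a n)%N)
  (Ha_incr : forall n, (a n < a n.+1)%N)
  (Ha_supp : forall n i, (a n <= i)%N -> u n i = 0)
  (Ha_l1 : forall n, \sum_(i < a n) `|u n i| < (a n)%:R) :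
  ~ LUR (@c0 R) (read_norm a u).
Proof.
move=> lur; have a_gt := incr_gt_id (Ha_pos 0) Ha_incr.
have u_l1 n := ltW (Ha_l1 n).
have e0_gt0 := e0_norm_gt0 R a_gt u_l1.
have dist0 : (read_norm a u (spike a u n - center a u) @[n --> \oo] --> (0 : R))%classic :=
  lur _ (c0_center a u) (read_norm_center R a_gt u_l1) _ (fun n => c0_two_point _ _ _)
    (read_norm_spike R a_gt u_l1) (read_norm_center_add_spike_cvg a_gt u_l1).
suff : (e0_norm R a u)^-1 <= 0 by rewrite leNgt invr_gt0 e0_gt0.
apply: (ler_cvg_to (cvgV (lt0r_neq0 e0_gt0) (spike_norm_cvg a_gt u_l1)) dist0).
exact: nearW (read_norm_spike_sub_center_ge R a_gt u_l1).
Qed.
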